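(* For any instance of MPMD or MBPMD, the connection cost $\mathrm{dist}(\mathrm{pos}(u),\mathrm{pos}(v))$ of every matching edge $(u,v)$ created by Greedy Dual is at most $2\sum_{S\subseteq V}\mathrm{sur}(S)\,y_S(T)$, where $V$ is the set of all requests and $T$ is the time at which Greedy Dual matches the last request.
   Context: Problem (MPMD / MBPMD). Let $(\mathcal{X},\mathrm{dist})$ be a metric space. An instance consists of $2m$ requests $u_1,\dots,u_{2m}$. Each request $u$ is a triple $(\mathrm{pos}(u),\mathrm{atime}(u),\mathrm{sgn}(u))$, where $\mathrm{pos}(u)\in\mathcal{X}$ is its location and $\mathrm{atime}(u)\ge0$ is its arrival time, with arrival times nondecreasing. In MPMD, $\mathrm{sgn}(u)=0$ for all requests. In MBPMD, exactly $m$ requests have sign $+1$ and $m$ have sign $-1$. At time $\tau$, an algorithm may match two arrived, unmatched requests $u,v$ with $\mathrm{sgn}(u)=-\mathrm{sgn}(v)$, at cost $\mathrm{dist}(\mathrm{pos}(u),\mathrm{pos}(v))$ (connection cost) plus $(\tau-\mathrm{atime}(u))+(\tau-\mathrm{atime}(v))$ (waiting costs). All requests must eventually be matched. Notation. Edges are unordered pairs $\{u,v\}$ of distinct requests with $\mathrm{sgn}(u)=-\mathrm{sgn}(v)$. For a set $S$ of requests, $\delta(S)$ is the set of edges with exactly one endpoint in $S$. In MPMD, $\mathrm{sur}(S)=|S|\bmod 2$; in MBPMD, $\mathrm{sur}(S)=|\sum_{u\in S}\mathrm{sgn}(u)|$. For an edge $e=(u,v)$, $\mathrm{cost}(e)=\mathrm{dist}(\mathrm{pos}(u),\mathrm{pos}(v))+|\mathrm{atime}(u)-\mathrm{atime}(v)|$.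 Algorithm Greedy Dual (GD). GD maintains a dual variable $y_S\ge0$ for every set $S$ of already-arrived requests; $y_S(\tau)$ denotes its value at time $\tau$. It also maintains a partition of the arrived requests into active sets, with $\mathcal{A}(u)$ denoting the active set containing $u$. An active set is growing if it contains at least one free request, and non-growing otherwise. - When a request $u$ arrives, $\mathcal{A}(u)\leftarrow\{u\}$ becomes a new active set, and $y_S\leftarrow 0$ for every new set $S$ containing $u$. - Tight-constraint event: while there is an edge $e=(u,v)$ between arrived requests with $\mathcal{A}(u)\neq\mathcal{A}(v)$ and $\sum_{S:\,e\in\delta(S)}y_S=\mathrm{cost}(e)$, GD does the following. It merges the two sets: $S=\mathcal{A}(u)\cup\mathcal{A}(v)$ becomes active and $\mathcal{A}(w)\leftarrow S$ for all $w\in S$, while $\mathcal{A}(u)$ and $\mathcal{A}(v)$ become inactive. It marks the edge $e$. Then, while there are free $u',v'\in S$ with $\mathrm{sgn}(u')=-\mathrm{sgn}(v')$, it matches $u'$ with $v'$ at the current time. - At all other times, $y_S$ increases continuously at rate $1$ (the same rate as time) for every active growing set $S$; all other dual variables stay constant. *)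

From HB Require Import structures.
From mathcomp Require Import all_boot all_order all_algebra.
Set Implicit Arguments. Unset Strict Implicit. Unset Printing Implicit Defensive.
Import Order.TTheory GRing.Theory Num.Theory.
Local Open Scope ring_scope.

Inductive problem := MPMD | MBPMD.

Definition is_metric (R : realFieldType) (X : Type) (dist : X -> X -> R) : Prop :=
  [/\ forall x y, 0 <= dist x y,
      forall x y, dist x y = 0 <-> x = y,
      forall x y, dist x y = dist y x &
      forall x y z, dist x z <= dist x y + dist y z].

Definition valid_signs (p : problem) (m : nat) (sgn : 'I_(m.*2) -> int) : Prop :=
  match p with
  | MPMD => forall u, sgn u = 0
  | MBPMD => (forall u, sgn u = 1 \/ sgn u = -1) /\ #|[set u | sgn u == 1]| = m
  end.

Section GD.
Variables (R : realFieldType) (X : Type) (dist : X -> X -> R) (p : problem)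
  (n : nat) (pos : 'I_n -> X) (atime : 'I_n -> R) (sgn : 'I_n -> int).

Definition sur (S : {set 'I_n}) : R :=
  match p with
  | MPMD => (odd #|S|)%:R
  | MBPMD => (absz (\sum_(u in S) sgn u))%:R
  end.

Definition is_edge (u v : 'I_n) : bool := (u != v) && (sgn u == - sgn v).

Definition cost (u v : 'I_n) : R := dist (pos u) (pos v) + `|atime u - atime v|.

Definition dual_lhs (y : {set 'I_n} -> R) (u v : 'I_n) : R :=
  \sum_(S : {set 'I_n} | (u \in S) != (v \in S)) y S.

(* State of GD: current time, number of arrived requests (requests arrive in
   index order), dual variables, active set A(u) of each request, matching. *)
Record state := mkState {
  clock : R;
  narr : nat;
  yv : {set 'I_n} -> R;
  act : 'I_n -> {set 'I_n};
  mate : 'I_n -> option 'I_n }.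

Definition arrived (s : state) (u : 'I_n) : bool := (u < narr s)%N.
Definition free (s : state) (u : 'I_n) : bool := mate s u == None.

Definition active (s : state) (S : {set 'I_n}) : bool :=
  [exists u, arrived s u && (act s u == S)].
Definition growing (s : state) (S : {set 'I_n}) : bool :=
  [exists w, (w \in S) && free s w].
Definition rate (s : state) (S : {set 'I_n}) : R :=
  if active s S && growing s S then 1 else 0.

Definition matchable (s : state) (u v : 'I_n) : bool :=
  [&& arrived s u, arrived s v, u != v, free s u, free s v,
      act s u == act s v & sgn u == - sgn v].
Definition settled (s : state) : Prop := forall u v, ~~ matchable s u v.

Definition tight_at (s : state) (y : {set 'I_n} -> R) (u v : 'I_n) : Prop :=
  [/\ arrived s u, arrived s v, is_edge u v, act s u != act s v &
      dual_lhs y u v = cost u v].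

Definition init : state :=
  mkState 0 0 (fun _ => 0) (fun _ => set0) (fun _ => None).

Inductive step : state -> state -> Prop :=
  | StArrive s :
      settled s -> (narr s < n)%N ->
      (forall k : 'I_n, val k = narr s -> atime k = clock s) ->
      step s (mkState (clock s) (narr s).+1 (yv s)
               (fun w => if val w == narr s then [set w] else act s w) (mate s))
  | StTight s u v :
      settled s -> tight_at s (yv s) u v ->
      step s (mkState (clock s) (narr s) (yv s)
               (fun w => if w \in act s u :|: act s v then act s u :|: act s v
                         else act s w) (mate s))
  | StMatch s u v :
      matchable s u v ->
      step s (mkState (clock s) (narr s) (yv s) (act s)
               (fun w => if w == u then Some v else if w == v then Some u
                         else mate s w))
  (* continuous growth during [clock, clock + d): no tight edge occurs and no
     request arrives strictly inside the interval *)
  | StGrow s (d : R) :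
      0 < d -> settled s ->
      (forall k : 'I_n, val k = narr s -> clock s + d <= atime k) ->
      (forall t, 0 <= t -> t < d -> forall u v,
          ~ tight_at s (fun S => yv s S + t * rate s S) u v) ->
      step s (mkState (clock s + d) (narr s) (fun S => yv s S + d * rate s S)
               (act s) (mate s)).

Inductive reachable : state -> Prop :=
  | Reach0 : reachable init
  | ReachS s s' : reachable s -> step s s' -> reachable s'.

Definition all_matched (s : state) : Prop := forall u, mate s u != None.

End GD.

From Pilot Require Import Defs.
From HB Require Import structures.
From mathcomp Require Import all_boot all_order all_algebra.
From mathcomp Require Import lra.
(* Write y for the duals and A(u) for the active set of u.  Greedy Dual maintains,
   for any two requests u, v in the same active set A,
     dist(u, v) <= sum_(S subset of A) (2 - [u in S] - [v in S]) y_S.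
   This holds for singletons and survives dual growth.  When two active sets are
   merged along a tight edge (a, b) it follows from
   dist(u, v) <= dist(u, a) + dist(a, b) + dist(b, v), because dist(a, b) is paid
   by the duals of the sets separating a and b, and the sets of positive dual form
   a laminar family refining the active sets.  A set only gains dual while it is
   active and holds a free request; no two of its free requests can be matched,
   so its surplus is at least 1 and each coefficient 2 - [u in S] - [v in S] is at
   most 2 sur(S). *)

Set Implicit Arguments. Unset Strict Implicit. Unset Printing Implicit Defensive.
Import Order.TTheory GRing.Theory Num.Theory.
Local Open Scope ring_scope.

Section CrossingBound.
Variables (R : realDomainType) (T : finType).
Implicit Types (A B S : {set T}) (u v a b : T).

(* For S inside A, a path of marked edges from u to v within A crosses the
   boundary of S at most 2 - [u in S] - [v in S] times. *)
Definition crossing_bound (A : {set T}) (u v : T) (S : {set T}) : R :=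
  (S \subset A)%:R * (2 - (u \in S)%:R - (v \in S)%:R).

Lemma crossing_bound_ge0 A u v S : 0 <= crossing_bound A u v S.
Proof.
by rewrite /crossing_bound; case: (S \subset A); case: (u \in S); case: (v \in S);
  rewrite /=; lra.
Qed.

Lemma crossing_bound_le2 A u v S : crossing_bound A u v S <= 2.
Proof.
by rewrite /crossing_bound; case: (S \subset A); case: (u \in S); case: (v \in S);
  rewrite /=; lra.
Qed.

Lemma crossing_boundC A u v S : crossing_bound A u v S = crossing_bound A v u S.
Proof. by rewrite /crossing_bound -addrA (addrC (- _)) addrA. Qed.

Lemma crossing_bound_subset A B u v S :
  A \subset B -> crossing_bound A u v S <= crossing_bound B u v S.
Proof.
move=> sAB; rewrite /crossing_bound; case sSA: (S \subset A).
  by rewrite (subset_trans sSA sAB).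
by rewrite mul0r -/(crossing_bound B u v S) crossing_bound_ge0.
Qed.

Lemma crossing_bound_merge A B S u a b v :
  [disjoint A & B] -> S != set0 ->
  (S \subset A) || [disjoint S & A] -> (S \subset B) || [disjoint S & B] ->
  u \in A -> a \in A -> b \in B -> v \in B ->
  crossing_bound A u a S + ((a \in S) != (b \in S))%:R + crossing_bound B b v S
    <= crossing_bound (A :|: B) u v S.
Proof.
move=> dAB /set0Pn [z zS] lamA lamB uA aA bB vB.
rewrite /crossing_bound.
have [sSA | nsSA] := boolP (S \subset A).
  have zNB : z \in B = false by rewrite (disjointFr dAB (subsetP sSA z zS)).
  have dSB : [disjoint S & B].
    by case/orP: lamB => // /subsetP /(_ z zS); rewrite zNB.
  have sSNB : S \subset B = false.
    by apply/negbTE/subsetPn; exists z => //; rewrite zNB.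
  rewrite sSNB (subset_trans sSA (subsetUl A B)) (disjointFl dSB bB) (disjointFl dSB vB).
  by case: (u \in S); case: (a \in S); rewrite /=; lra.
have dSA : [disjoint S & A] by case/orP: lamA => //; rewrite (negbTE nsSA).
rewrite (disjointFl dSA uA) (disjointFl dSA aA).
have [sSB | nsSB] := boolP (S \subset B).
  rewrite (subset_trans sSB (subsetUr A B)).
  by case: (b \in S); case: (v \in S); rewrite /=; lra.
have dSB : [disjoint S & B] by case/orP: lamB => //; rewrite (negbTE nsSB).
rewrite (disjointFl dSB bB) (disjointFl dSB vB) /= !mul0r !add0r.
by apply: mulr_ge0 => //; case: (S \subset A :|: B); rewrite /=; lra.
Qed.

End CrossingBound.

Arguments crossing_bound {R T}.

Section GreedyDual.
Variables (R : realFieldType) (X : Type) (dist : X -> X -> R) (p : problem)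
  (n : nat) (pos : 'I_n -> X) (atime : 'I_n -> R) (sgn : 'I_n -> int).
Hypothesis dist_metric : is_metric dist.
Hypothesis sgn_MPMD : p = MPMD -> forall u, sgn u = 0.
Hypothesis sgn_MBPMD : p = MBPMD -> forall u, sgn u = 1 \/ sgn u = -1.

Local Notation gd_state := (state R n).
Implicit Types (s : gd_state) (A M S : {set 'I_n}) (u v w x z : 'I_n).

Lemma dist_xx y : dist y y = 0.
Proof. by case: dist_metric => _ dist0 _ _; apply/dist0. Qed.

Lemma distC y1 y2 : dist y1 y2 = dist y2 y1.
Proof. by case: dist_metric. Qed.

Lemma dist_triangle y1 y2 y3 : dist y1 y3 <= dist y1 y2 + dist y2 y3.
Proof. by case: dist_metric. Qed.

Definition balanced M : Prop := ~~ odd #|M| /\ \sum_(w in M) sgn w = 0.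

Lemma balanced0 : balanced set0.
Proof. by rewrite /balanced cards0 big_set0. Qed.

Lemma balancedID A M : balanced (M :&: A) -> balanced (M :\: A) -> balanced M.
Proof.
move=> [evenI sumI] [evenD sumD]; split.
  by rewrite -(cardsID A M) oddD (negbTE evenI) (negbTE evenD).
by rewrite (big_setID A) /= sumI sumD addr0.
Qed.

Lemma balanced_pair M u v : u \notin M -> v \notin M -> u != v ->
  sgn u = - sgn v -> balanced M -> balanced (u |: (v |: M)).
Proof.
move=> uM vM uv sgn_uv [evenM sumM].
have uvM : u \notin v |: M by rewrite !inE negb_or uv.
split; first by rewrite !cardsU1 uvM vM /= negbK.
by rewrite !big_setU1 //= sumM sgn_uv addr0 addNr.
Qed.

Lemma sur_balanced_setD A M : balanced (A :&: M) -> sur R p sgn A = sur R p sgn (A :\: M).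
Proof.
move=> [evenI sumI]; rewrite /sur; case: p.
  by rewrite -(cardsID M A) oddD (negbTE evenI).
by rewrite (big_setID M) /= sumI add0r.
Qed.

Definition matched s : {set 'I_n} := [set w | mate s w != None].

Definition path_bound s u v : R :=
  \sum_S yv s S * crossing_bound (act s u) u v S.

Record gd_invariant s : Prop := {
  act_self : forall x, arrived s x -> x \in act s x;
  act_class : forall x z, arrived s x -> z \in act s x ->
    arrived s z /\ act s z = act s x;
  mate_act : forall u v, mate s u = Some v ->
    [/\ arrived s u, arrived s v & act s u = act s v];
  act_matched_balanced : forall x, arrived s x -> balanced (act s x :&: matched s);
  dual_ge0 : forall S, 0 <= yv s S;
  dual_support : forall S, yv s S != 0 -> [/\ S != set0,
    forall z, z \in S -> arrived s z /\ S \subset act s z & 1 <= sur R p sgn S];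
  dist_le_path_bound : forall u v, arrived s u -> arrived s v ->
    act s u = act s v -> dist (pos u) (pos v) <= path_bound s u v }.

Lemma path_bound_ge0 s u v : (forall S, 0 <= yv s S) -> 0 <= path_bound s u v.
Proof.
by move=> y_ge0; apply: sumr_ge0 => S _; rewrite mulr_ge0 ?crossing_bound_ge0.
Qed.

Section Invariant.
Variable s : gd_state.
Hypothesis Is : gd_invariant s.

Lemma act_disjoint x y : arrived s x -> arrived s y -> act s x != act s y ->
  [disjoint act s x & act s y].
Proof.
move=> Ax Ay nxy; apply/pred0P => z /=; apply/negbTE/andP => -[zx zy].
by move: nxy; rewrite -(act_class Is Ax zx).2 (act_class Is Ay zy).2 eqxx.
Qed.

Lemma dual_support_laminar S x : yv s S != 0 -> arrived s x ->
  (S \subset act s x) || [disjoint S & act s x].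
Proof.
move=> yS Ax; have [_ Ssub _] := dual_support Is yS.
case: (boolP [disjoint S & act s x]) => [_|/pred0Pn [z /andP [zS zx]]].
  by rewrite orbT.
by rewrite -(act_class Is Ax zx).2 (Ssub z zS).2.
Qed.

Lemma sur_ge1_of_free x w : settled sgn s -> arrived s x ->
  w \in act s x -> mate s w = None -> 1 <= sur R p sgn (act s x).
Proof.
move=> settled_s Ax wx Fw.
have [Aw Ew] := act_class Is Ax wx.
set F := act s x :\: matched s.
have wF : w \in F by rewrite !inE Fw eqxx wx.
have F_unmatchable f : f \in F -> f != w -> sgn f != - sgn w.
  rewrite !inE negbK => /andP [Ff fx] fw.
  have [Af Ef] := act_class Is Ax fx.
  by have := settled_s f w; rewrite /matchable Af Aw fw /Defs.free Ff Fw Ef Ew eqxx.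
rewrite (sur_balanced_setD (act_matched_balanced Is Ax)) -/F /sur.
case Ep: p.
- suff -> : F = [set w] by rewrite cards1.
  apply/setP => f; rewrite in_set1; apply/idP/idP => [fF|/eqP -> //].
  apply/negPn/negP => fw; have := F_unmatchable f fF fw.
  by rewrite (sgn_MPMD Ep f) (sgn_MPMD Ep w).
- have sgnF f : f \in F -> sgn f = sgn w.
    move=> fF; have [-> // | fw] := eqVneq f w.
    have := F_unmatchable f fF fw.
    by case: (sgn_MBPMD Ep f) => ->; case: (sgn_MBPMD Ep w) => ->.
  rewrite (eq_bigr (fun _ => sgn w)) // sumr_const ler1n.
  have -> : `|sgn w *+ #|F| |%N = #|F|.
    by case: (sgn_MBPMD Ep w) => ->; rewrite ?mulNrn ?abszN natz.
  by rewrite card_gt0; apply/set0Pn; exists w.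
Qed.

Lemma dist_le_cross_bound a b u v : arrived s a -> arrived s b -> act s a != act s b ->
  dist (pos a) (pos b) <= dual_lhs (yv s) a b -> u \in act s a -> v \in act s b ->
  dist (pos u) (pos v) <= \sum_S yv s S * crossing_bound (act s a :|: act s b) u v S.
Proof.
move=> Aa Ab nab dab ua vb.
have [Au Eu] := act_class Is Aa ua.
have [Av Ev] := act_class Is Ab vb.
apply: le_trans (dist_triangle _ (pos a) _) _.
apply: le_trans (lerD (lexx _) (dist_triangle _ (pos b) _)) _.
apply: le_trans (lerD (dist_le_path_bound Is Au Aa Eu)
  (lerD dab (dist_le_path_bound Is Ab Av (esym Ev)))) _.
rewrite /path_bound /dual_lhs [X in _ + (X + _)]big_mkcond /= Eu -!big_split /=.
apply: ler_sum => S _.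
have [-> | yS] := eqVneq (yv s S) 0; first by rewrite !mul0r; case: ifP; rewrite !addr0.
have [S0 _ _] := dual_support Is yS.
have -> : (if (a \in S) != (b \in S) then yv s S else 0)
    = yv s S * ((a \in S) != (b \in S))%:R by case: ifP; rewrite ?mulr1 ?mulr0.
rewrite -!mulrDr addrA; apply: (ler_wpM2l (dual_ge0 Is S)).
apply: crossing_bound_merge => //; first exact: act_disjoint.
- exact: dual_support_laminar yS Aa.
- exact: dual_support_laminar yS Ab.
- exact (act_self Is Aa).
- exact (act_self Is Ab).
Qed.

End Invariant.

Lemma init_inv : gd_invariant (init R n).
Proof. by split => //= S; rewrite eqxx. Qed.

Lemma arrive_inv s : gd_invariant s ->
  gd_invariant (mkState (clock s) (narr s).+1 (yv s)
    (fun w => if val w == narr s then [set w] else act s w) (mate s)).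
Proof.
move=> Is; set s' := mkState _ _ _ _ _.
have old_ne x : arrived s x -> (val x == narr s) = false.
  by rewrite /arrived => Ax; apply/negbTE; rewrite neq_ltn Ax.
have arrived_old x : arrived s' x -> val x != narr s -> arrived s x.
  by rewrite /arrived /= ltnS leq_eqVlt => /orP [/eqP ->|]; rewrite ?eqxx.
have arrived_new x : arrived s x -> arrived s' x by exact: ltnW.
have fresh_free x : val x == narr s -> mate s x = None.
  move=> /eqP xn; case E: (mate s x) => [y|] //.
  by have [] := mate_act Is E; rewrite /arrived xn ltnn.
have self' x : arrived s' x -> x \in act s' x.
  rewrite /=; case: ifP => [_ _|xn Ax]; first by rewrite set11.
  by apply: (act_self Is); apply: arrived_old; rewrite ?xn.
split => //.
- move=> x z Ax /=; case: ifP => xn.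
    by rewrite inE => /eqP ->; rewrite xn.
  move=> zx; have [Az ->] := act_class Is (arrived_old _ Ax (negbT xn)) zx.
  by rewrite old_ne //; split => //; apply: arrived_new.
- move=> u v /(mate_act Is) [Au Av Auv] /=.
  by rewrite !old_ne // Auv; split => //; apply: arrived_new.
- move=> x Ax /=; case: ifP => xn.
    suff -> : [set x] :&: matched s' = set0 by exact: balanced0.
    by apply/setP => w; rewrite !inE; case: eqP => // ->; rewrite fresh_free.
  exact/(act_matched_balanced Is)/arrived_old/negbT.
- exact: dual_ge0 Is.
- move=> S /(dual_support Is) [S0 Ssub sur1]; split => // z /Ssub [Az sSz].
  by rewrite /= old_ne //; split => //; apply: arrived_new.
- move=> u v Au Av Euv.
  have [un | un] := eqVneq (val u) (narr s).
    have -> : v = u by move: (self' v Av); rewrite -Euv /= un eqxx inE => /eqP.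
    by rewrite dist_xx path_bound_ge0 //; apply: dual_ge0 Is.
  have [vn | vn] := eqVneq (val v) (narr s).
    have -> : u = v by move: (self' u Au); rewrite Euv /= vn eqxx inE => /eqP.
    by rewrite dist_xx path_bound_ge0 //; apply: dual_ge0 Is.
  move: Euv; rewrite /path_bound /= (negbTE un) (negbTE vn) => Euv.
  exact (dist_le_path_bound Is (arrived_old _ Au un) (arrived_old _ Av vn) Euv).
Qed.

Lemma match_inv s u v : gd_invariant s -> matchable sgn s u v ->
  gd_invariant (mkState (clock s) (narr s) (yv s) (act s)
    (fun w => if w == u then Some v else if w == v then Some u else mate s w)).
Proof.
move=> Is /and5P [Au Av uv /eqP Fu /and3P [/eqP Fv /eqP Auv /eqP sgn_uv]].
set s' := mkState _ _ _ _ _.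
have matched' : matched s' = u |: (v |: matched s).
  apply/setP => w; rewrite !inE /=.
  by have [//|_] := eqVneq w u; have [//|_] := eqVneq w v.
split; [exact: act_self Is | exact: act_class Is | | |
        exact: dual_ge0 Is | exact: dual_support Is | exact: dist_le_path_bound Is].
- move=> w y /=; case: eqP => [-> [<-]|_]; first by rewrite Auv.
  case: eqP => [-> [<-]|_]; first by rewrite Auv.
  exact: mate_act Is w y.
- move=> x Ax; rewrite matched' /=.
  have [ux | uNx] := boolP (u \in act s x).
    have vx : v \in act s x by rewrite -(act_class Is Ax ux).2 Auv act_self.
    have -> : act s x :&: (u |: (v |: matched s)) = u |: (v |: (act s x :&: matched s)).
      apply/setP => w; rewrite !inE.
      have [->|_] := eqVneq w u; first by rewrite ux.
      by have [->|_] := eqVneq w v; first by rewrite vx.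
    by apply: balanced_pair; rewrite ?inE ?Fu ?Fv ?eqxx ?andbF //;
      exact (act_matched_balanced Is Ax).
  have vNx : v \notin act s x.
    by apply: contra uNx => vx; rewrite -(act_class Is Ax vx).2 -Auv act_self.
  have -> : act s x :&: (u |: (v |: matched s)) = act s x :&: matched s.
    apply/setP => w; rewrite !inE.
    have [->|_] := eqVneq w u; first by rewrite (negbTE uNx).
    by have [->|_] := eqVneq w v; first by rewrite (negbTE vNx).
  exact (act_matched_balanced Is Ax).
Qed.

Lemma grow_inv s d : gd_invariant s -> 0 < d -> settled sgn s ->
  gd_invariant (mkState (clock s + d) (narr s) (fun S => yv s S + d * rate s S)
    (act s) (mate s)).
Proof.
move=> Is d_gt0 settled_s.
have dual_grow S : yv s S <= yv s S + d * rate s S.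
  by rewrite lerDl; apply: mulr_ge0; [exact: ltW | rewrite /rate; case: ifP].
split; [exact: act_self Is | exact: act_class Is | exact: mate_act Is |
        exact: act_matched_balanced Is | | | ].
- by move=> S; apply: le_trans (dual_ge0 Is S) (dual_grow S).
- move=> S /=; rewrite /rate; case: ifP => [|_]; last first.
    by rewrite mulr0 addr0; exact: dual_support Is S.
  case/andP => /existsP [x /andP [Ax /eqP <-]] /existsP [w /andP [wx /eqP Fw]] _.
  split.
  + by apply/set0Pn; exists x; exact (act_self Is Ax).
  + by move=> z zx; have [Az ->] := act_class Is Ax zx.
  + exact: sur_ge1_of_free settled_s Ax wx Fw.
- move=> u v Au Av Euv; apply: le_trans (dist_le_path_bound Is Au Av Euv) _.
  apply: ler_sum => S _; apply: ler_wpM2r (dual_grow S).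
  exact: crossing_bound_ge0.
Qed.

Lemma dist_le_merged_bound s a b u v : gd_invariant s ->
  arrived s a -> arrived s b -> act s a != act s b ->
  dist (pos a) (pos b) <= dual_lhs (yv s) a b ->
  arrived s u -> arrived s v ->
  u \in act s a :|: act s b -> v \in act s a :|: act s b ->
  dist (pos u) (pos v) <= \sum_S yv s S * crossing_bound (act s a :|: act s b) u v S.
Proof.
move=> Is Aa Ab nab dab Au Av uC vC.
have [Euv | nuv] := eqVneq (act s u) (act s v).
  apply: le_trans (dist_le_path_bound Is Au Av Euv) _.
  apply: ler_sum => S _; apply: (ler_wpM2l (dual_ge0 Is S)).
  apply: crossing_bound_subset.
  by case/setUP: uC => /(act_class Is) [] // _ ->; [apply: subsetUl | apply: subsetUr].
move: uC vC => /setUP [ua | ub] /setUP [va | vb].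
- by move: nuv; rewrite (act_class Is Aa ua).2 (act_class Is Aa va).2 eqxx.
- exact: dist_le_cross_bound.
- rewrite distC; under eq_bigr do rewrite crossing_boundC.
  exact: dist_le_cross_bound.
- by move: nuv; rewrite (act_class Is Ab ub).2 (act_class Is Ab vb).2 eqxx.
Qed.

Lemma tight_inv s a b : gd_invariant s -> tight_at dist pos atime sgn s (yv s) a b ->
  gd_invariant (mkState (clock s) (narr s) (yv s)
    (fun w => if w \in act s a :|: act s b then act s a :|: act s b else act s w)
    (mate s)).
Proof.
move=> Is [Aa Ab _ nab tight].
set C := act s a :|: act s b.
have dAB := act_disjoint Is Aa Ab nab.
have dab : dist (pos a) (pos b) <= dual_lhs (yv s) a b by rewrite tight /cost lerDl.
have act_subC z : arrived s z -> z \in C -> act s z \subset C.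
  by move=> Az /setUP [] /(act_class Is) [] // _ ->; [apply: subsetUl | apply: subsetUr].
have class_inC x z : arrived s x -> z \in act s x -> (z \in C) = (x \in C).
  move=> Ax zx; have [Az Ezx] := act_class Is Ax zx.
  apply/idP/idP => [zC | xC]; last exact (subsetP (act_subC x Ax xC) z zx).
  have xz : x \in act s z by rewrite Ezx (act_self Is Ax).
  exact (subsetP (act_subC z Az zC) x xz).
split => /=.
- by move=> x Ax; case: ifP => // _; exact (act_self Is Ax).
- move=> x z Ax; case: ifP => xC zx.
    have Az : arrived s z.
      by case/setUP: zx => [/(act_class Is Aa) [] | /(act_class Is Ab) []].
    by rewrite zx.
  by have [Az ->] := act_class Is Ax zx; rewrite (class_inC x z Ax zx) xC.
- move=> u v /(mate_act Is) [Au Av Euv]; split => //.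
  by rewrite (class_inC u v Au) ?Euv // (act_self Is Av).
- move=> x Ax; rewrite -[matched _]/(matched s).
  case: ifP => xC; last exact (act_matched_balanced Is Ax).
  apply: (balancedID (A := act s a)).
  + have -> : C :&: matched s :&: act s a = act s a :&: matched s.
      by apply/setP => t; rewrite !inE; case: (t \in act s a); rewrite /= ?andbT ?andbF.
    exact (act_matched_balanced Is Aa).
  + have -> : C :&: matched s :\: act s a = act s b :&: matched s.
      apply/setP => t; rewrite !inE.
      by have [tA|//] := boolP (t \in act s a); rewrite (disjointFr dAB tA).
    exact (act_matched_balanced Is Ab).
- exact (dual_ge0 Is).
- move=> S /(dual_support Is) [S0 Ssub sur1]; split => // z /Ssub [Az sSz]; split => //.
  by case: ifP => zC //; apply: subset_trans sSz (act_subC z Az zC).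
- move=> u v Au Av; rewrite /path_bound /=.
  case: ifP => uC; case: ifP => vC.
  + by move=> _; apply: dist_le_merged_bound.
  + by move=> E; move: vC; rewrite E (act_self Is Av).
  + by move=> E; move: uC; rewrite -E (act_self Is Au).
  + exact (dist_le_path_bound Is Au Av).
Qed.

Lemma reachable_inv s : reachable dist pos atime sgn s -> gd_invariant s.
Proof.
elim=> [|s0 s1 _ Is0 step01]; first exact: init_inv.
case: step01 Is0 => [s' _ _ _ | s' a b _ tight | s' u v uv | s' d d_gt0 settled_s _ _] Is.
- exact: arrive_inv.
- exact: tight_inv tight.
- exact: match_inv uv.
- exact: grow_inv.
Qed.

Lemma matched_dist_le s u v : gd_invariant s -> mate s u = Some v ->
  dist (pos u) (pos v) <= 2 * \sum_S sur R p sgn S * yv s S.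
Proof.
move=> Is /(mate_act Is) [Au Av Euv].
apply: le_trans (dist_le_path_bound Is Au Av Euv) _.
rewrite /path_bound mulr_sumr; apply: ler_sum => S _.
have [-> | yS] := eqVneq (yv s S) 0; first by rewrite !mulr0 mul0r.
have [_ _ sur_ge1] := dual_support Is yS.
apply: le_trans (ler_wpM2l (dual_ge0 Is S) (crossing_bound_le2 _ _ _ _ _)) _.
rewrite mulrC mulrCA; apply: ler_peMl sur_ge1.
by rewrite mulr_ge0 ?dual_ge0.
Qed.

End GreedyDual.

Theorem lemma7 (R : realFieldType) (X : Type) (dist : X -> X -> R)
  (p : problem) (m : nat) (pos : 'I_(m.*2) -> X) (atime : 'I_(m.*2) -> R)
  (sgn : 'I_(m.*2) -> int)
  (Hmetric : is_metric dist)
  (Hnonneg : forall u, 0 <= atime u)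
  (Hmono : forall u v : 'I_(m.*2), (u <= v)%N -> atime u <= atime v)
  (Hsgn : valid_signs p sgn)
  (s : state R (m.*2))
  (Hreach : reachable dist pos atime sgn s)
  (Hdone : all_matched s) :
  forall u v, mate s u = Some v ->
    dist (pos u) (pos v) <= 2 * \sum_(S : {set 'I_(m.*2)}) @sur R p _ sgn S * yv s S.
Proof.
have sgn_MPMD : p = MPMD -> forall u, sgn u = 0.
  by move=> Ep; move: Hsgn; rewrite Ep.
have sgn_MBPMD : p = MBPMD -> forall u, sgn u = 1 \/ sgn u = -1.
  by move=> Ep; move: Hsgn; rewrite Ep => -[].
move=> u v; exact (matched_dist_le (reachable_inv Hmetric sgn_MPMD sgn_MBPMD Hreach)).
Qed.
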